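(* Let $G$ and $H$ be finite simple graphs, neither of which is complete. Then for all vertices $(g,h),(g',h')$ of $G\diamond H$, either $d_{G\diamond H}((g,h),(g',h'))\le 3$ or $d_{G\diamond H}((g,h),(g',h'))=\infty$; moreover the latter can happen only when both $G$ and $H$ are disjoint unions of two complete graphs.
   Context: The modular product $G\diamond H$ has vertex set $V(G)\times V(H)$; distinct vertices $(g,h)$ and $(g',h')$ are adjacent iff ($g=g'$ and $hh'\in E(H)$), or ($gg'\in E(G)$ and $h=h'$), or ($gg'\in E(G)$ and $hh'\in E(H)$), or ($g\neq g'$, $h\neq h'$, $gg'\notin E(G)$ and $hh'\notin E(H)$). $d_X(u,v)$ is the usual graph distance, equal to $\infty$ if $u,v$ lie in different components. *)

From mathcomp Require Import all_boot.
Set Implicit Arguments. Unset Strict Implicit. Unset Printing Implicit Defensive.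

Definition simple_graph (T : finType) (e : rel T) : Prop :=
  symmetric e /\ irreflexive e.

Definition complete_graph (T : finType) (e : rel T) : Prop :=
  forall x y : T, x != y -> e x y.

Definition two_cliques (T : finType) (e : rel T) : Prop :=
  exists A : {set T}, [/\ A != set0, ~: A != set0 &
    forall x y : T, x != y -> e x y = ((x \in A) == (y \in A))].

Definition modprod (T1 T2 : finType) (eG : rel T1) (eH : rel T2) : rel (T1 * T2) :=
  fun x y =>
    (x != y) &&
    [|| ((x.1 == y.1) && eH x.2 y.2),
        (eG x.1 y.1 && (x.2 == y.2)),
        (eG x.1 y.1 && eH x.2 y.2)
      | [&& x.1 != y.1, x.2 != y.2, ~~ eG x.1 y.1 & ~~ eH x.2 y.2]].

Definition dist_le (T : finType) (e : rel T) (u v : T) (k : nat) : Prop :=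
  exists p : seq T, [/\ path e u p, last u p = v & size p <= k].

Definition dist_inf (T : finType) (e : rel T) (u v : T) : Prop :=
  ~~ connect e u v.

From mathcomp Require Import all_boot.
From Stdlib Require Import Classical.

Set Implicit Arguments. Unset Strict Implicit. Unset Printing Implicit Defensive.

(* Suppose (g,h) and (g',h') are at distance more than 3 in G <> H.  They are
   not adjacent, so up to swapping the factors g' is g or a neighbour of g while
   h' is a non-neighbour of h.  Every short walk that is then ruled out yields a
   structural constraint: the closed neighbourhood of g is a clique, so is its
   complement, and no edge joins the two; the complement is nonempty because G
   is not complete, and a vertex x0 in it lets the same argument show that the
   closed neighbourhood of h and its complement split H into two cliques.
   Conversely, when G and H both split as cliques A | ~A and C | ~C, the
   modular product is itself the disjoint union of two complete graphs, the
   parts being separated by whether a vertex (x, y) has (x \in A) == (y \in C). *)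

Section Walks.

Variables (T : finType) (e : rel T).

Lemma dist_le_refl u k : dist_le e u u k.
Proof. by exists [::]. Qed.

Lemma dist_le_edge u v k : e u v -> dist_le e u v k.+1.
Proof. by move=> uv; exists [:: v]; rewrite /= uv. Qed.

Lemma dist_le_edge2 u a v k : e u a -> e a v -> dist_le e u v k.+2.
Proof. by move=> ua av; exists [:: a; v]; rewrite /= ua av. Qed.

Lemma dist_le_edge3 u a b v k : e u a -> e a b -> e b v -> dist_le e u v k.+3.
Proof. by move=> ua ab bv; exists [:: a; b; v]; rewrite /= ua ab bv. Qed.

Lemma dist_le_connect u v k : dist_le e u v k -> connect e u v.
Proof. by case=> p [ep <- _]; apply/connectP; exists p. Qed.

Lemma dist_le_map (T' : finType) (e' : rel T') (f : T -> T') u v k :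
  {homo f : x y / e x y >-> e' x y} -> dist_le e u v k -> dist_le e' (f u) (f v) k.
Proof.
move=> hf [p [ep <- sp]]; exists (map f p); split; rewrite ?last_map ?size_map //.
by rewrite path_map; apply: sub_path ep => x y /hf.
Qed.

End Walks.

Definition closed_nbhd (T : finType) (e : rel T) (x : T) : {set T} :=
  [set y | (y == x) || e x y].

Lemma two_cliques_parts (T : finType) (e : rel T) (A : {set T}) :
  symmetric e -> A != set0 -> ~: A != set0 ->
  {in A &, forall x y, x != y -> e x y} ->
  {in ~: A &, forall x y, x != y -> e x y} ->
  {in A & ~: A, forall x y, ~~ e x y} ->
  two_cliques e.
Proof.
move=> sym A0 CA0 eA eCA nAC; exists A; split=> // x y xy.
have [xA|xA] := boolP (x \in A); have [yA|yA] := boolP (y \in A).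
- by rewrite eA.
- by rewrite (negbTE (nAC x y _ _)) ?inE.
- by rewrite sym (negbTE (nAC y x _ _)) ?inE.
- by rewrite eCA ?inE.
Qed.

Lemma two_cliques_dist (T : finType) (e : rel T) u v k :
  two_cliques e -> dist_le e u v k.+1 \/ dist_inf e u v.
Proof.
case=> A [_ _ eA]; have [uvA|uvA] := boolP ((u \in A) == (v \in A)).
  left; have [->|uv] := eqVneq u v; first exact: dist_le_refl.
  by apply: dist_le_edge; rewrite eA.
right; apply/negP=> /(closed_connect _) uv; rewrite uv ?eqxx // in uvA.
by move=> x y; have [->|xy] := eqVneq x y => // exy; apply/eqP; rewrite -eA.
Qed.

Section ModularProduct.

Variables (T1 T2 : finType) (eG : rel T1) (eH : rel T2).

Lemma modprod_close g h x y :
  (g == x) || eG g x -> (h == y) || eH h y -> (g != x) || (h != y) ->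
  modprod eG eH (g, h) (x, y).
Proof.
rewrite /modprod /= xpair_eqE.
by case: (g == x); case: (h == y); case: (eG g x); case: (eH h y).
Qed.

Lemma modprod_far g h x y :
  g != x -> ~~ eG g x -> h != y -> ~~ eH h y -> modprod eG eH (g, h) (x, y).
Proof.
rewrite /modprod /= xpair_eqE.
by case: (g == x); case: (h == y); case: (eG g x); case: (eH h y).
Qed.

Lemma modprod_edgel g x h :
  irreflexive eG -> eG g x -> modprod eG eH (g, h) (x, h).
Proof.
move=> iG gx; apply: modprod_close; rewrite ?gx ?eqxx ?orbT //.
by apply/orP; left; apply: contraTneq gx => ->; rewrite iG.
Qed.

Lemma modprod_edger g h y :
  irreflexive eH -> eH h y -> modprod eG eH (g, h) (g, y).
Proof.
move=> iH hy; apply: modprod_close; rewrite ?hy ?eqxx ?orbT //.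
by apply/orP; right; apply: contraTneq hy => ->; rewrite iH.
Qed.

Lemma modprodC x y :
  modprod eH eG (x.2, x.1) (y.2, y.1) = modprod eG eH x y.
Proof.
case: x y => [a b] [c d]; rewrite /modprod /= !xpair_eqE.
by case: (a == c); case: (b == d); case: (eG a c); case: (eH b d).
Qed.

Lemma two_cliques_modprod :
  simple_graph eG -> simple_graph eH -> two_cliques eG -> two_cliques eH ->
  two_cliques (modprod eG eH).
Proof.
move=> [_ iG] [_ iH] [A [A0 CA0 eA]] [C [C0 CC0 eC]].
case/set0Pn: A0 => a aA; case/set0Pn: C0 => c cC; case/set0Pn: CC0 => c' c'C.
exists [set x | (x.1 \in A) == (x.2 \in C)]; split.
- by apply/set0Pn; exists (a, c); rewrite inE /= aA cC.
- by apply/set0Pn; exists (a, c'); rewrite !inE /= aA; rewrite inE in c'C.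
case=> [x1 x2] [y1 y2] xy; rewrite !inE /= /modprod xy /=.
have [E1|ne1] := eqVneq x1 y1; have [E2|ne2] := eqVneq x2 y2.
- by rewrite E1 E2 eqxx in xy.
all: rewrite -?E1 -?E2 ?iG ?iH ?eA ?eC ?eqxx //=.
all: by case: (x1 \in A); case: (y1 \in A); case: (x2 \in C); case: (y2 \in C).
Qed.

End ModularProduct.

Section FarPair.

Variables (T1 T2 : finType) (eG : rel T1) (eH : rel T2).
Hypotheses (simpleG : simple_graph eG) (simpleH : simple_graph eH).
Hypothesis incompleteG : ~ complete_graph eG.
Variables (g g' : T1) (h h' : T2).
Hypothesis gg' : (g == g') || eG g g'.
Hypotheses (hh' : h != h') (nhh' : ~~ eH h h').
Hypothesis far : ~ dist_le (modprod eG eH) (g, h) (g', h') 3.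

(* Each lemma below exhibits a walk of length at most 3 from (g,h) to (g',h')
   that would exist if the conclusion failed. *)

Let symG := simpleG.1.
Let irrG := simpleG.2.
Let symH := simpleH.1.
Let irrH := simpleH.2.

Let neq_of_eG x y : eG x y -> x != y.
Proof. by apply: contraTneq => ->; rewrite irrG. Qed.

Let neq_of_eH x y : eH x y -> x != y.
Proof. by apply: contraTneq => ->; rewrite irrH. Qed.

Lemma nbrG_adj_tgt x : eG g x -> x != g' -> eG x g'.
Proof.
move=> gx xg'; apply/negPn/negP=> nxg'; apply: far.
apply: (dist_le_edge2 (a := (x, h))); first exact: modprod_edgel.
exact: modprod_far.
Qed.

Lemma adj_tgtG_nbr x : x != g -> eG x g' -> eG g x.
Proof.
move=> xg xg'; apply/negPn/negP=> ngx; apply: far.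
apply: (dist_le_edge2 (a := (x, h'))); first by apply: modprod_far; rewrite // eq_sym.
exact: modprod_edgel.
Qed.

Lemma nbrG_eq_adj_tgt x : x != g -> x != g' -> eG g x = eG x g'.
Proof.
by move=> xg xg'; apply/idP/idP=> e;
  [exact: nbrG_adj_tgt e xg' | exact: adj_tgtG_nbr xg e].
Qed.

Lemma nbrsG_adj w x : eG g w -> eG x g' -> w != x -> eG w x.
Proof.
move=> gw xg' wx; apply/negPn/negP=> nwx; apply: far.
apply: (dist_le_edge3 (a := (w, h)) (b := (x, h'))); first exact: modprod_edgel.
  exact: modprod_far.
exact: modprod_edgel.
Qed.

Lemma nonnbrsG_adj x w :
  x != g -> ~~ eG g x -> w != g' -> ~~ eG w g' -> x != w -> eG x w.
Proof.
move=> xg ngx wg' nwg' xw; apply/negPn/negP=> nxw; apply: far.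
apply: (dist_le_edge3 (a := (x, h')) (b := (w, h))).
- by apply: modprod_far; rewrite // eq_sym.
- by apply: modprod_far => //; [rewrite eq_sym | rewrite symH].
- exact: modprod_far.
Qed.

Lemma nonnbrG_nonadj_tgt x w : x != g -> ~~ eG g x -> eG x w -> ~~ eG w g'.
Proof.
move=> xg ngx xw; apply/negP=> wg'; apply: far.
apply: (dist_le_edge3 (a := (x, h')) (b := (w, h'))).
- by apply: modprod_far; rewrite // eq_sym.
- exact: modprod_edgel.
- exact: modprod_edgel.
Qed.

Local Notation A := (closed_nbhd eG g).

Lemma tgt_in_nbhdG : g' \in A.
Proof. by rewrite inE eq_sym. Qed.

Lemma nbhdG_clique : {in A &, forall x y, x != y -> eG x y}.
Proof.
move=> x y; rewrite !inE => /orP[/eqP->|gx] /orP[/eqP->|gy] xy //.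
- by rewrite eqxx in xy.
- by rewrite symG.
have xg : x != g by rewrite eq_sym neq_of_eG.
have yg : y != g by rewrite eq_sym neq_of_eG.
have [xg'|xg'] := eqVneq x g'.
  by rewrite xg' symG -nbrG_eq_adj_tgt // -xg' eq_sym.
have [yg'|yg'] := eqVneq y g'; first by rewrite yg' -nbrG_eq_adj_tgt.
by apply: nbrsG_adj; rewrite // -nbrG_eq_adj_tgt.
Qed.

Lemma nbhdCG_clique : {in ~: A &, forall x y, x != y -> eG x y}.
Proof.
move=> x y xA yA xy.
have yg' : y != g' by apply: contraTneq yA => ->; rewrite inE tgt_in_nbhdG.
move: xA yA; rewrite !inE !negb_or => /andP[xg ngx] /andP[yg ngy].
by apply: nonnbrsG_adj; rewrite // -nbrG_eq_adj_tgt.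
Qed.

Lemma nbhdG_nbhdCG_nonadj : {in A & ~: A, forall x y, ~~ eG x y}.
Proof.
move=> x y xA yA.
have yg' : y != g' by apply: contraTneq yA => ->; rewrite inE tgt_in_nbhdG.
move: xA yA; rewrite !inE negb_or => /orP[/eqP->|gx] /andP[yg ngy] //.
apply/negP=> xy; have [xg'|xg'] := eqVneq x g'.
  by move: ngy; rewrite nbrG_eq_adj_tgt // -xg' symG xy.
have xg : x != g by rewrite eq_sym neq_of_eG.
have nxg' : ~~ eG x g' by apply: (nonnbrG_nonadj_tgt yg ngy); rewrite symG.
by rewrite -nbrG_eq_adj_tgt ?gx in nxg'.
Qed.

Lemma nbhdCG_neq0 : ~: A != set0.
Proof.
apply/negP=> /eqP CA0; apply: incompleteG => x y; apply: nbhdG_clique;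
  by apply/negPn; rewrite -in_setC CA0 in_set0.
Qed.

Lemma two_cliques_left : two_cliques eG.
Proof.
apply: (two_cliques_parts symG _ nbhdCG_neq0 nbhdG_clique nbhdCG_clique).
  by apply/set0Pn; exists g; rewrite inE eqxx.
exact: nbhdG_nbhdCG_nonadj.
Qed.

Lemma exists_far_vertexG :
  exists x0, [/\ x0 != g, x0 != g', ~~ eG g x0 & ~~ eG x0 g'].
Proof.
case/set0Pn: nbhdCG_neq0 => x0; rewrite inE => x0A.
have x0g' : x0 != g' by apply: contraNneq x0A => ->; exact: tgt_in_nbhdG.
move: x0A; rewrite inE negb_or => /andP[x0g ngx0]; exists x0; split=> //.
by rewrite -nbrG_eq_adj_tgt.
Qed.

Lemma nbrH_nonadj_tgt y : eH h y -> ~~ eH y h'.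
Proof.
move=> hy; apply/negP=> yh'; apply: far.
apply: (dist_le_edge2 (a := (g, y))); first exact: modprod_edger.
by apply: modprod_close; rewrite ?gg' ?yh' ?neq_of_eH ?orbT.
Qed.

Lemma nbr2H_nonadj_tgt y z : eH h y -> eH y z -> ~~ eH z h'.
Proof.
move=> hy yz; apply/negP=> zh'; apply: far.
apply: (dist_le_edge3 (a := (g, y)) (b := (g, z))); try exact: modprod_edger.
by apply: modprod_close; rewrite ?gg' ?zh' ?neq_of_eH ?orbT.
Qed.

Section FarVertex.

Variable x0 : T1.
Hypotheses (x0g : x0 != g) (x0g' : x0 != g') (ngx0 : ~~ eG g x0) (nx0g' : ~~ eG x0 g').

Let gx0 : g != x0. Proof. by rewrite eq_sym. Qed.

Lemma nonnbrH_adj_tgt y : y != h -> ~~ eH h y -> y != h' -> eH y h'.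
Proof.
move=> yh nhy yh'; apply/negPn/negP=> nyh'; apply: far.
by apply: (dist_le_edge2 (a := (x0, y))); apply: modprod_far => //; rewrite eq_sym.
Qed.

Lemma nbrH_adj_nonnbr_tgt y1 y2 :
  eH h y1 -> y1 != y2 -> y2 != h' -> ~~ eH y2 h' -> eH y1 y2.
Proof.
move=> hy1 y12 y2h' ny2h'; apply/negPn/negP=> ny12; apply: far.
apply: (dist_le_edge3 (a := (g, y1)) (b := (x0, y2))); first exact: modprod_edger.
  exact: modprod_far.
exact: modprod_far.
Qed.

Lemma nbr_tgtH_adj_nonnbr y1 y2 :
  eH y1 h' -> y2 != y1 -> h != y2 -> ~~ eH h y2 -> eH y2 y1.
Proof.
move=> y1h' y21 hy2 nhy2; apply/negPn/negP=> ny21; apply: far.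
apply: (dist_le_edge3 (a := (x0, y2)) (b := (g', y1))); first exact: modprod_far.
  exact: modprod_far.
exact: modprod_edger.
Qed.

Local Notation C := (closed_nbhd eH h).

Lemma nbhdH_nonadj_tgt y : y \in C -> (y != h') && ~~ eH y h'.
Proof.
rewrite inE => /orP[/eqP->|hy]; first by rewrite hh' nhh'.
by rewrite nbrH_nonadj_tgt // andbT; apply: contraTneq hy => ->.
Qed.

Lemma nbhdCH_adj_tgt y : y \notin C -> (y == h') || eH y h'.
Proof.
rewrite inE negb_or => /andP[yh nhy].
by have [//|yh'] := eqVneq y h'; apply: nonnbrH_adj_tgt.
Qed.

Lemma nbhdH_clique : {in C &, forall y z, y != z -> eH y z}.
Proof.
move=> y z yC zC; case/andP: (nbhdH_nonadj_tgt zC) => zh' nzh'.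
move: yC zC; rewrite !inE => /orP[/eqP->|hy] /orP[/eqP->|hz] yz //.
- by rewrite eqxx in yz.
- by rewrite symH.
- exact: nbrH_adj_nonnbr_tgt.
Qed.

Lemma nbhdCH_clique : {in ~: C &, forall y z, y != z -> eH y z}.
Proof.
move=> y z; rewrite !in_setC => yC zC yz.
case/orP: (nbhdCH_adj_tgt yC) => [/eqP yh'|yh'];
  case/orP: (nbhdCH_adj_tgt zC) => [/eqP zh'|zh'].
- by rewrite yh' zh' eqxx in yz.
- by rewrite yh' symH.
- by rewrite zh'.
move: yC zC; rewrite !inE !negb_or => /andP[yh nhy] /andP[zh nhz].
by rewrite symH; apply: nbr_tgtH_adj_nonnbr; rewrite // eq_sym.
Qed.

Lemma nbhdH_nbhdCH_nonadj : {in C & ~: C, forall y z, ~~ eH y z}.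
Proof.
move=> y z yC; rewrite in_setC => zC; case/andP: (nbhdH_nonadj_tgt yC) => _ nyh'.
case/orP: (nbhdCH_adj_tgt zC) => [/eqP->|zh'] //.
move: yC zC; rewrite !inE negb_or => /orP[/eqP->|hy] /andP[_ nhz] //.
by apply/negP=> yz; move/negP: (nbr2H_nonadj_tgt hy yz).
Qed.

Lemma two_cliques_right_of : two_cliques eH.
Proof.
apply: (two_cliques_parts symH _ _ nbhdH_clique nbhdCH_clique nbhdH_nbhdCH_nonadj).
  by apply/set0Pn; exists h; rewrite inE eqxx.
by apply/set0Pn; exists h'; rewrite !inE negb_or eq_sym hh'.
Qed.

End FarVertex.

Lemma two_cliques_right : two_cliques eH.
Proof.
have [x0 [x0g x0g' ngx0 nx0g']] := exists_far_vertexG.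
exact: (two_cliques_right_of x0g x0g' ngx0 nx0g').
Qed.

End FarPair.

Lemma far_two_cliques (T1 T2 : finType) (eG : rel T1) (eH : rel T2) u v :
  simple_graph eG -> simple_graph eH ->
  ~ complete_graph eG -> ~ complete_graph eH ->
  ~ dist_le (modprod eG eH) u v 3 -> two_cliques eG /\ two_cliques eH.
Proof.
case: u v => [g h] [g' h'] simpleG simpleH incG incH far.
have [uv|uv] := eqVneq (g, h) (g', h'); first by case: far; rewrite uv; apply: dist_le_refl.
have nadj : ~~ modprod eG eH (g, h) (g', h') 
  by apply/negP=> adj; apply: far; apply: dist_le_edge.
rewrite xpair_eqE negb_and in uv.
have [Hg|Hg] := boolP ((g == g') || eG g g'); have [Hh|Hh] := boolP ((h == h') || eH h h').
- by case/negP: nadj; apply: modprod_close.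
- move: Hh; rewrite negb_or => /andP[hh' nhh'].
  by split; [apply: two_cliques_left far | apply: two_cliques_right far].
- move: Hg; rewrite negb_or => /andP[gg' ngg'].
  have far' : ~ dist_le (modprod eH eG) (h, g) (h', g') 3.
    apply: contra_not far => /(dist_le_map (f := fun x => (x.2, x.1))); apply=> x y.
    by rewrite -(modprodC eH eG).
  by split; [apply: two_cliques_right far' | apply: two_cliques_left far'].
- move: Hg Hh; rewrite !negb_or => /andP[gg' ngg'] /andP[hh' nhh'].
  by case/negP: nadj; apply: modprod_far.
Qed.

Theorem mainTheorem3 (T1 T2 : finType) (eG : rel T1) (eH : rel T2) :
  simple_graph eG -> simple_graph eH ->
  ~ complete_graph eG -> ~ complete_graph eH ->
  (forall u v : T1 * T2,
      dist_le (modprod eG eH) u v 3 \/ dist_inf (modprod eG eH) u v) /\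
  ((exists u v : T1 * T2, dist_inf (modprod eG eH) u v) ->
      two_cliques eG /\ two_cliques eH).
Proof.
move=> simpleG simpleH incG incH; split.
  move=> u v; have [near|far] := classic (dist_le (modprod eG eH) u v 3); first by left.
  have [tG tH] := far_two_cliques simpleG simpleH incG incH far.
  exact/two_cliques_dist/two_cliques_modprod.
move=> [u [v /negP disconnected]].
by apply: (@far_two_cliques _ _ _ _ u v) => // /dist_le_connect.
Qed.
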